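(* Let $(B,g)$ be a feasible tradable credit scheme and let the travel times $\tau$ have a convex potential function. Then $\lambda\in\mathbb{R}_{\ge0}$ is a market equilibrium price if and only if $\lambda\in[\underline\lambda,\overline\lambda]$, where $\underline\lambda=\min\{\lambda\ge0:\exists x\in\mathrm{WE}(\lambda)\text{ with }G(x)\le B\}$ and $\overline\lambda=\sup\bigl(\{\lambda\ge0:\exists x\in\mathrm{WE}(\lambda)\text{ with }G(x)\ge B\}\cup\{0\}\bigr)$.
   Context: Let $G=(V,E)$ be a directed graph and $I$ a finite set of commodities; commodity $i$ has source $s_i$, sink $t_i$, demand $d_i>0$; $\mathcal P_i$ is its set of simple $s_i$–$t_i$ paths, $\mathcal P=\{(i,p)\}$. A flow $x\in\mathbb{R}^{\mathcal P}_{\ge0}$ is feasible if $\sum_{p\in\mathcal P_i}x_{i,p}=d_i$; $\mathcal F$ is the set of feasible flows; $x_e$ is the total flow on edge $e$. A tradable credit scheme is a pair $(B,g)$ with $B\ge0$ (number of credits) and credit charges $g_e\ge0$ for $e\in E$; $G(x)=\sum_eg_ex_e$. It is feasible if some $x\in\mathcal F$ has $G(x)\le B$. Travel times $\tau_{i,p}:\mathcal F\to\mathbb{R}$ have a convex potential: a convex differentiable $\Phi$ with $\tau_{i,p}(x)=\partial\Phi/\partial x_{i,p}(x)$ on $\mathcal F$. For $\lambda\ge0$, $c^\lambda_{i,p}(x)=\tau_{i,p}(x)+\lambda\sum_{e\in p}g_e$; $x\in\mathrm{WE}(\lambda)$ means $x\in\mathcal F$ and $x_{i,p}>0$ implies $c^\lambda_{i,p}(x)\le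 c^\lambda_{i,q}(x)$ for all $q\in\mathcal P_i$. A pair $(x,\lambda)$ with $x\in\mathcal F$, $\lambda\ge0$ is a market equilibrium if $x\in\mathrm{WE}(\lambda)$, $G(x)\le B$ and $\lambda(G(x)-B)=0$; then $\lambda$ is a market equilibrium price. *)

From HB Require Import structures.
From mathcomp Require Import all_boot all_order all_algebra.
From mathcomp Require Import boolp classical_sets reals constructive_ereal ereal.
Set Implicit Arguments. Unset Strict Implicit. Unset Printing Implicit Defensive.
Import Order.TTheory GRing.Theory Num.Theory.
Local Open Scope ring_scope.
Local Open Scope classical_set_scope.

Section TCS.
Variables (R : realType) (V : finType) (E : rel V) (I : finType) (s t : I -> V).

(* vertex sequences of length <= #|V| (every simple path fits) *)
Definition vpath := {n : 'I_(#|V|).+1 & n.-tuple V}.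
Definition vseq (p : vpath) : seq V := tagged p.

Definition simple_path (a b : V) (q : seq V) : bool :=
  match q with
  | v :: q' => [&& v == a, path E v q', last v q' == b & uniq q]
  | [::] => false
  end.

Definition is_cpath (ip : I * vpath) : bool :=
  simple_path (s ip.1) (t ip.1) (vseq ip.2).

Definition cpath := {ip : I * vpath | is_cpath ip}.
Definition com (p : cpath) : I := (val p).1.
Definition pedges (p : cpath) : seq (V * V) :=
  let q := vseq (val p).2 in zip q (behead q).

Definition feasible_flow (d : I -> R) (x : cpath -> R) : Prop :=
  (forall p, 0 <= x p) /\ (forall i, \sum_(p : cpath | com p == i) x p = d i).

Definition edge_flow (x : cpath -> R) (e : V * V) : R :=
  \sum_(p : cpath | e \in pedges p) x p.

Definition Gtot (g : V -> V -> R) (x : cpath -> R) : R :=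
  \sum_(e : V * V | E e.1 e.2) g e.1 e.2 * edge_flow x e.

Definition pcharge (g : V -> V -> R) (p : cpath) : R :=
  \sum_(e <- pedges p) g e.1 e.2.

Definition gcost (tau : (cpath -> R) -> cpath -> R) (g : V -> V -> R)
  (l : R) (x : cpath -> R) (p : cpath) : R := tau x p + l * pcharge g p.

Definition WE (d : I -> R) tau g (l : R) (x : cpath -> R) : Prop :=
  feasible_flow d x /\
  forall p q : cpath, com p = com q -> 0 < x p -> gcost tau g l x p <= gcost tau g l x q.

Definition feasible_scheme (d : I -> R) (B : R) (g : V -> V -> R) : Prop :=
  0 <= B /\ (forall u v, E u v -> 0 <= g u v) /\
  exists x, feasible_flow d x /\ Gtot g x <= B.

Definition market_eq (d : I -> R) tau g (B : R) (x : cpath -> R) (l : R) : Prop :=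
  [/\ feasible_flow d x, 0 <= l, WE d tau g l x, Gtot g x <= B
    & l * (Gtot g x - B) = 0].

Definition market_eq_price d tau g B (l : R) : Prop :=
  exists x, market_eq d tau g B x l.

Definition has_gradient (Phi : (cpath -> R) -> R) (x D : cpath -> R) : Prop :=
  forall eps : R, 0 < eps -> exists2 delta : R, 0 < delta &
    forall y : cpath -> R, (forall p, `|y p - x p| <= delta) ->
      `|Phi y - Phi x - \sum_(p : cpath) D p * (y p - x p)|
        <= eps * \sum_(p : cpath) `|y p - x p|.

Definition convex_potential (d : I -> R) (tau : (cpath -> R) -> cpath -> R)
  (Phi : (cpath -> R) -> R) : Prop :=
  (forall x y (a : R), feasible_flow d x -> feasible_flow d y -> 0 <= a <= 1 ->
     Phi (fun p => a * x p + (1 - a) * y p) <= a * Phi x + (1 - a) * Phi y) /\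
  (forall x, feasible_flow d x -> has_gradient Phi x (tau x)).

Definition low_set d tau g (B : R) : set R :=
  [set l | 0 <= l /\ exists x, WE d tau g l x /\ Gtot g x <= B].

Definition up_set d tau g (B : R) : set R :=
  [set l | 0 <= l /\ exists x, WE d tau g l x /\ B <= Gtot g x].

(* overline lambda, in the extended reals (may be +oo) *)
Definition lambda_bar d tau g (B : R) : \bar R :=
  ereal_sup ([set (l%:E) | l in up_set d tau g B] `|` [set 0%E]).

End TCS.

(* Fix a flow xs minimising the potential Phi over the compact convex set of
   feasible flows within the budget.  As Phi is a convex potential and G is
   linear, x is in WE(l) iff x minimises Phi + l G over all feasible flows;
   hence for any market equilibrium (x, l) the flow xs does as well as x, and
   (xs, l) is again a market equilibrium.  The equilibrium conditions at xs are
   affine in l, so these prices form an interval.  Its least element comes from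
   an exchange argument at xs: moving flow between two pairs of paths in the
   proportion that keeps G fixed cannot decrease Phi.  Finally G is
   nonincreasing in l along equilibria, which makes the least price the minimum
   of the low set and bounds the interval by the supremum of the up set. *)

From HB Require Import structures.
From mathcomp Require Import all_boot all_order all_algebra.
From mathcomp Require Import boolp classical_sets functions reals constructive_ereal ereal.
From mathcomp Require Import topology normedtype derive.
From mathcomp Require Import ring lra.
Set Implicit Arguments. Unset Strict Implicit. Unset Printing Implicit Defensive.
Import Order.TTheory GRing.Theory Num.Theory.
Import numFieldNormedType.Exports.
Local Open Scope ring_scope.
Local Open Scope classical_set_scope.

(* Function spaces [T -> R] get the product topology (pointwise convergence). *)
Import ArrowAsProduct.

Section PointwiseTopology.
Variables (R : realFieldType) (T : finType).

Lemma near_coordwise (x : T -> R) (e : R) : 0 < e ->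
  \forall y \near x, forall p, `|x p - y p| < e.
Proof.
move=> e0; apply: (@filter_forall _ _ _ (nbhs x)) => p.
have := @proj_continuous T (fun=> R) p x.
move=> /(_ [set r | `|x p - r| < e]); apply; apply/nbhs_ballP; exists e => // r; rewrite /ball /=.
Qed.

Lemma continuous_at_coordwise (f : (T -> R) -> R) (x : T -> R) :
  (forall e, 0 < e -> exists2 dl, 0 < dl &
     forall y, (forall p, `|x p - y p| < dl) -> `|f x - f y| < e) ->
  {for x, continuous f}.
Proof.
move=> f_cont A /nbhs_ballP [e /= e_gt0 fA].
have [dl dl_gt0 Hdl] := f_cont e e_gt0.
by apply: filterS (near_coordwise x dl_gt0) => y /Hdl /fA.
Qed.

Lemma linear_continuous (a : T -> R) :
  continuous (fun x : T -> R => \sum_p a p * x p).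
Proof.
rewrite -(fct_sumE _ _ (fun p (x : T -> R) => a p * x p)).
apply: (big_ind (fun f : (T -> R) -> R => continuous f)) => [|f h fc hc x|p _ x].
- exact: cst_continuous.
- exact: (continuousD (fc x) (hc x)).
- by apply: continuousM; [exact: cst_continuous | exact: proj_continuous].
Qed.

End PointwiseTopology.

Section RealFieldFacts.
Variable R : realFieldType.

Lemma ler_term_sum (T : finType) (F : T -> R) (i : T) :
  (forall j, 0 <= F j) -> F i <= \sum_j F j.
Proof. by move=> F_ge0; rewrite (bigD1 i) //= lerDl sumr_ge0. Qed.

Lemma slope_le (h : R -> R) (m k e1 : R) :
  (forall eps, 0 < eps -> exists2 e0, 0 < e0 &
     forall e, 0 < e -> e <= e0 -> `|h e - e * m| <= e * eps) ->
  0 < e1 -> (forall e, 0 < e -> e <= e1 -> h e <= e * k) -> m <= k.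
Proof.
move=> hm e1_gt0 hk; rewrite leNgt; apply/negP => km.
have [e0 e0_gt0 he0] : exists2 e0, 0 < e0 &
    forall e, 0 < e -> e <= e0 -> `|h e - e * m| <= e * ((m - k) / 2).
  by apply: hm; rewrite divr_gt0 // subr_gt0.
pose e := Num.min e0 e1.
have e_gt0 : 0 < e by rewrite lt_min e0_gt0.
have e_le_e0 : e <= e0 by rewrite ge_min lexx.
have e_le_e1 : e <= e1 by rewrite ge_min lexx orbT.
have := he0 e e_gt0 e_le_e0; have := hk e e_gt0 e_le_e1.
rewrite ler_norml => hke /andP[hme _].
have : e * ((m - k) / 2) <= 0 by lra.
rewrite pmulr_rle0 //; lra.
Qed.

Lemma slope_ge (h : R -> R) (m k e1 : R) :
  (forall eps, 0 < eps -> exists2 e0, 0 < e0 &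
     forall e, 0 < e -> e <= e0 -> `|h e - e * m| <= e * eps) ->
  0 < e1 -> (forall e, 0 < e -> e <= e1 -> e * k <= h e) -> k <= m.
Proof.
move=> hm e1_gt0 hk; rewrite -lerN2.
apply: (@slope_le (fun e => - h e) _ _ e1) => // [eps eps_gt0|e e_gt0 ee1].
  have [e0 e0_gt0 he0] := hm eps eps_gt0; exists e0 => // e e_gt0 ee0.
  by rewrite mulrN opprK -normrN opprD opprK; apply: he0.
by rewrite mulrN lerN2; apply: hk.
Qed.

Lemma ler_price_threshold (t t' c c' l : R) : c < c' ->
  (t + l * c <= t' + l * c') = ((t - t') / (c' - c) <= l).
Proof. by move=> cc'; rewrite ler_pdivrMr ?subr_gt0 //; apply/idP/idP => h; lra. Qed.

End RealFieldFacts.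

Lemma affine_ge0_le_sup (R : realType) (S : set R) (a b lo l : R) :
  0 <= lo -> lo <= l -> (l%:E <= ereal_sup ([set x%:E | x in S] `|` [set 0%E]))%E ->
  0 <= a + lo * b -> (forall mu, S mu -> lo < mu -> 0 <= a + mu * b) ->
  0 <= a + l * b.
Proof.
move=> lo_ge0 lo_le_l l_le_sup f_lo f_S; rewrite leNgt; apply/negP => f_l.
have b_lt0 : b < 0 by nra.
pose r := - a / b.
have rb : r * b = - a by rewrite /r divfK ?lt_eqF.
have lo_le_r : lo <= r by nra.
have r_lt_l : r < l by nra.
have /ereal_sup_gt [_ [[mu S_mu <-]|->]] : (r%:E < ereal_sup ([set x%:E | x in S] `|` [set 0%E]))%E.
- exact: lt_le_trans l_le_sup.
- rewrite lte_fin => r_lt_mu; have := f_S mu S_mu (le_lt_trans lo_le_r r_lt_mu); nra.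
- rewrite lte_fin; lra.
Qed.


Lemma path_zip_rel (V : eqType) (E : rel V) (v : V) (q : seq V) :
  path E v q -> forall e, e \in zip (v :: q) q -> E e.1 e.2.
Proof.
elim: q v => [|w q IH] v //= /andP[Evw pq] e; rewrite inE => /orP[/eqP -> //|].
exact: IH.
Qed.

Section Flows.
Variables (R : realType) (V : finType) (E : rel V) (I : finType) (s t : I -> V).
Local Notation P := (cpath E s t).

Lemma pedges_uniq (p : P) : uniq (pedges p).
Proof.
case: p => [[i q]]; rewrite /pedges /is_cpath /=.
by case: (vseq q) => [|v q'] //= /and4P[_ _ _ uq]; exact: zip_uniql.
Qed.

Lemma in_pedges_E (p : P) e : e \in pedges p -> E e.1 e.2.
Proof.
case: p => [[i q]]; rewrite /pedges /is_cpath /=.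
by case: (vseq q) => [|v q'] //= /and4P[_ pq _ _]; exact: path_zip_rel.
Qed.

Lemma Gtot_lin (g : V -> V -> R) (x : P -> R) :
  Gtot g x = \sum_p pcharge g p * x p.
Proof.
rewrite /Gtot /edge_flow; under eq_bigr do rewrite mulr_sumr.
rewrite (exchange_big_dep xpredT) //=; apply: eq_bigr => p _.
rewrite /pcharge mulr_suml big_uniq ?pedges_uniq // [RHS]big_mkcond [LHS]big_mkcond.
apply: eq_bigr => e _; case: (boolP (e \in pedges p)) => ep; last by rewrite andbF.
by rewrite (in_pedges_E ep).
Qed.

Lemma Gtot_diff (g : V -> V -> R) (x y : P -> R) :
  Gtot g y - Gtot g x = \sum_p pcharge g p * (y p - x p).
Proof. by rewrite !Gtot_lin -sumrB; apply: eq_bigr => p _; rewrite mulrBr. Qed.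

Lemma sum_gcost tau g (l : R) (x v : P -> R) :
  \sum_p gcost tau g l x p * v p =
  \sum_p tau x p * v p + l * \sum_p pcharge g p * v p.
Proof.
rewrite mulr_sumr -big_split; apply: eq_bigr => p _.
by rewrite /gcost mulrDl mulrA.
Qed.

Definition lerp (x y : P -> R) (e : R) : P -> R := fun p => e * y p + (1 - e) * x p.

Lemma lerp_sub (x y : P -> R) (e : R) p : lerp x y e p - x p = e * (y p - x p).
Proof. by rewrite /lerp; ring. Qed.

Lemma Gtot_lerp (g : V -> V -> R) (x y : P -> R) (e : R) :
  Gtot g (lerp x y e) = Gtot g x + e * (Gtot g y - Gtot g x).
Proof.
rewrite !Gtot_lin mulrBr !mulr_sumr -sumrB -big_split.
by apply: eq_bigr => p _; rewrite /lerp /=; ring.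
Qed.

Variable d : I -> R.

Lemma feasible_flow_lerp (x y : P -> R) (e : R) : feasible_flow d x -> feasible_flow d y ->
  0 <= e <= 1 -> feasible_flow d (lerp x y e).
Proof.
move=> [x_ge0 x_dem] [y_ge0 y_dem] /andP[e_ge0 e_le1]; split=> [p|i].
  by rewrite addr_ge0 // mulr_ge0 // subr_ge0.
by rewrite big_split /= -!mulr_sumr x_dem y_dem; ring.
Qed.

Definition unit_move (p q : P) : P -> R := fun r => (r == q)%:R - (r == p)%:R.

Definition reroute (x : P -> R) (a : R) (p q : P) (b : R) (p' q' : P) : P -> R :=
  fun r => x r + a * unit_move p q r + b * unit_move p' q' r.

Lemma sum_reroute (F x : P -> R) a p q b p' q' :
  \sum_r F r * (reroute x a p q b p' q' r - x r) = a * (F q - F p) + b * (F q' - F p').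
Proof.
have sum_delta (v : P) : \sum_r F r * (r == v)%:R = F v.
  by rewrite (bigD1 v) //= eqxx mulr1 big1 ?addr0 // => r /negbTE ->; rewrite mulr0.
have sum_move (u v : P) : \sum_r F r * unit_move u v r = F v - F u.
  by rewrite -(sum_delta u) -(sum_delta v) -sumrB; apply: eq_bigr => r _; rewrite mulrBr.
rewrite -(sum_move p q) -(sum_move p' q') !mulr_sumr -big_split.
apply: eq_bigr => r _; rewrite /reroute /=.
by move: (unit_move p q r) (unit_move p' q' r) => m m'; ring.
Qed.

Lemma sum_com (i : I) (y : P -> R) :
  \sum_(r | com r == i) y r = \sum_r (com r == i)%:R * y r.
Proof. by rewrite big_mkcond; apply: eq_bigr => r _; rewrite mulr_natl mulrb. Qed.

Lemma feasible_flow_reroute (x : P -> R) a p q b p' q' : feasible_flow d x ->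
  com p = com q -> com p' = com q' -> 0 <= a -> 0 <= b -> a + b <= x p -> a + b <= x p' ->
  feasible_flow d (reroute x a p q b p' q').
Proof.
move=> [x_ge0 x_dem] cpq cpq' a_ge0 b_ge0 abp abp'; split=> [r|i].
  have ind_le : a * (r == p)%:R + b * (r == p')%:R <= x r.
    have := x_ge0 r; rewrite !mulr_natr !mulrb.
    by case: eqP => [->|_]; case: eqP => [->|_]; rewrite ?addr0 ?add0r //; lra.
  rewrite /reroute -addrA; apply: le_trans (_ : 0 <= x r - (a * (r == p)%:R + b * (r == p')%:R)) _.
    by rewrite subr_ge0.
  rewrite lerD2l opprD; apply: lerD; rewrite -mulrN ler_wpM2l // /unit_move lerDr //.
have -> : \sum_(r | com r == i) reroute x a p q b p' q' r =
    \sum_(r | com r == i) x r + \sum_r (com r == i)%:R * (reroute x a p q b p' q' r - x r).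
  by rewrite !sum_com -big_split; apply: eq_bigr => r _ /=; rewrite -mulrDr addrCA subrr addr0.
by rewrite sum_reroute x_dem cpq cpq' !subrr !mulr0 !addr0.
Qed.

Variables (tau : (P -> R) -> P -> R) (Phi : (P -> R) -> R).

Lemma has_gradient_lerp (x y D : P -> R) : has_gradient Phi x D ->
  forall eps, 0 < eps -> exists2 e0, 0 < e0 & forall e, 0 < e -> e <= e0 ->
    `|Phi (lerp x y e) - Phi x - e * \sum_p D p * (y p - x p)| <= e * eps.
Proof.
move=> gradD eps eps_gt0.
pose S := \sum_p `|y p - x p|.
have S1_gt0 : 0 < S + 1 by rewrite ltr_wpDl ?sumr_ge0.
have [dl dl_gt0 Hdl] := gradD (eps / (S + 1)) (divr_gt0 eps_gt0 S1_gt0).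
exists (dl / (S + 1)) => [|e e_gt0 e_le]; first exact: divr_gt0.
have dist_lerp : \sum_p `|lerp x y e p - x p| = e * S.
  by rewrite mulr_sumr; apply: eq_bigr => p _; rewrite lerp_sub normrM gtr0_norm.
have eS_le : e * S <= dl.
  have : e * S <= e * (S + 1) by rewrite ler_pM2l //; lra.
  by rewrite ler_pdivlMr // in e_le; lra.
have lerp_near p : `|lerp x y e p - x p| <= dl.
  rewrite lerp_sub normrM gtr0_norm // (le_trans _ eS_le) // ler_pM2l //.
  by apply: (@ler_term_sum _ P (fun p => `|y p - x p|) p) => j.
have lin_lerp : \sum_p D p * (lerp x y e p - x p) = e * \sum_p D p * (y p - x p).
  by rewrite mulr_sumr; apply: eq_bigr => p _; rewrite lerp_sub mulrCA.
have := Hdl _ lerp_near; rewrite dist_lerp lin_lerp => /le_trans; apply.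
rewrite mulrCA ler_pM2l // mulrAC ler_pdivrMr //; nra.
Qed.

Lemma has_gradient_continuous (x D : P -> R) : has_gradient Phi x D -> {for x, continuous Phi}.
Proof.
move=> gradD; apply: continuous_at_coordwise => e e_gt0.
have [dl dl_gt0 Hdl] := gradD 1 ltr01.
pose M := \sum_p (`|D p| + 1).
have M_ge0 : 0 <= M by apply: sumr_ge0 => p _; rewrite addr_ge0.
have M1_gt0 : 0 < M + 1 by lra.
exists (Num.min dl (e / (M + 1))) => [|y y_near]; first by rewrite lt_min dl_gt0 divr_gt0.
have y_dl p : `|y p - x p| <= dl.
  by rewrite distrC ltW // (lt_le_trans (y_near p)) // ge_min lexx.
have y_e p : `|y p - x p| <= e / (M + 1).
  by rewrite distrC ltW // (lt_le_trans (y_near p)) // ge_min lexx orbT.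
have := Hdl y y_dl; rewrite mul1r => grad.
have lin_bound : `|\sum_p D p * (y p - x p)| <= \sum_p `|D p| * `|y p - x p|.
  by apply: le_trans (ler_norm_sum _ _ _) _; apply: ler_sum => p _; rewrite normrM.
have sum_bound : \sum_p (`|D p| + 1) * `|y p - x p| <= M * (e / (M + 1)).
  by rewrite mulr_suml; apply: ler_sum => p _; rewrite ler_wpM2l ?addr_ge0.
have Me_lt : M * (e / (M + 1)) < e by rewrite mulrA ltr_pdivrMr //; nra.
have split_sum : \sum_p (`|D p| + 1) * `|y p - x p| =
    \sum_p `|D p| * `|y p - x p| + \sum_p `|y p - x p|.
  by rewrite -big_split; apply: eq_bigr => p _ /=; rewrite mulrDl mul1r.
have triangle : `|Phi y - Phi x| <= `|Phi y - Phi x - \sum_p D p * (y p - x p)| +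
    `|\sum_p D p * (y p - x p)|.
  by apply: le_trans (ler_normD _ _); rewrite subrK.
rewrite distrC; lra.
Qed.

Hypothesis hpot : convex_potential d tau Phi.

Lemma grad_le_diff (x y : P -> R) : feasible_flow d x -> feasible_flow d y ->
  \sum_p tau x p * (y p - x p) <= Phi y - Phi x.
Proof.
move=> fx fy; apply: (slope_le (has_gradient_lerp y (hpot.2 x fx)) ltr01) => e e_gt0 e_le1.
have := hpot.1 y x e fy fx; rewrite (ltW e_gt0) e_le1 => /(_ isT); rewrite /lerp; lra.
Qed.

(* VI: the variational inequality [0 <= \sum_p c p * (y p - x p)], where c is
   the generalised cost at x and y a competing flow. *)
Lemma VI_of_min (S : set (P -> R)) g (l : R) (x y : P -> R) : feasible_flow d x ->
  (forall e, 0 < e -> e <= 1 -> S (lerp x y e)) ->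
  (forall z, S z -> Phi x + l * Gtot g x <= Phi z + l * Gtot g z) ->
  0 <= \sum_p gcost tau g l x p * (y p - x p).
Proof.
move=> fx S_lerp x_min; rewrite sum_gcost -Gtot_diff.
suff : - (l * (Gtot g y - Gtot g x)) <= \sum_p tau x p * (y p - x p) by lra.
apply: (slope_ge (has_gradient_lerp y (hpot.2 x fx)) ltr01) => e e_gt0 e_le1.
have := x_min _ (S_lerp e e_gt0 e_le1); rewrite Gtot_lerp; lra.
Qed.

Lemma min_of_VI g (l : R) (x y : P -> R) : feasible_flow d x -> feasible_flow d y ->
  0 <= \sum_p gcost tau g l x p * (y p - x p) ->
  Phi x + l * Gtot g x <= Phi y + l * Gtot g y.
Proof.
move=> fx fy; rewrite sum_gcost -Gtot_diff; have := grad_le_diff fx fy; lra.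
Qed.

Hypothesis d_gt0 : forall i, 0 < d i.

Lemma feasible_flow_used (x : P -> R) (i : I) : feasible_flow d x ->
  exists2 p, com p = i & 0 < x p.
Proof.
move=> [x_ge0 x_dem].
have [p /andP[/eqP cp xp] | none] := pickP (fun p => (com p == i) && (0 < x p)).
  by exists p.
have : \sum_(p : P | com p == i) x p <= \sum_(p : P | com p == i) 0.
  by apply: ler_sum => p cp; have := none p; rewrite cp /= leNgt => /negbT.
by rewrite big1_eq x_dem leNgt d_gt0.
Qed.

Lemma WE_VI g (l : R) (x y : P -> R) : WE d tau g l x -> feasible_flow d y ->
  0 <= \sum_p gcost tau g l x p * (y p - x p).
Proof.
move=> [fx x_eq] [y_ge0 y_dem]; set c := gcost tau g l x.
rewrite (partition_big (@com _ _ _ _ _) xpredT) //=; apply: sumr_ge0 => i _.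
have [p0 /esym cp0 xp0] := feasible_flow_used i fx.
have split_cost p : com p == i -> c p * (y p - x p) = (c p - c p0) * y p + c p0 * (y p - x p).
  move=> /eqP cp; have [xp_eq0|xp_neq0] := eqVneq (x p) 0; first by rewrite xp_eq0; ring.
  have -> : c p = c p0.
    apply/eqP; rewrite eq_le !x_eq ?cp ?cp0 //.
    by rewrite lt_neqAle eq_sym xp_neq0 fx.1.
  ring.
rewrite (eq_bigr _ split_cost) big_split /= -mulr_sumr sumrB y_dem fx.2 subrr mulr0 addr0.
by apply: sumr_ge0 => p /eqP cp; rewrite mulr_ge0 ?y_ge0 // subr_ge0 x_eq // cp.
Qed.

Lemma VI_WE g (l : R) (x : P -> R) : feasible_flow d x ->
  (forall y, feasible_flow d y -> 0 <= \sum_p gcost tau g l x p * (y p - x p)) ->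
  WE d tau g l x.
Proof.
move=> fx x_VI; split=> // p q cpq xp_gt0.
have y_feas : feasible_flow d (reroute x (x p) p q 0 p q).
  by apply: feasible_flow_reroute; rewrite ?addr0 ?lexx // ltW.
by have := x_VI _ y_feas; rewrite sum_reroute mul0r addr0 pmulr_rge0 // subr_ge0.
Qed.

Lemma WE_min g (l : R) (x y : P -> R) : WE d tau g l x -> feasible_flow d y ->
  Phi x + l * Gtot g x <= Phi y + l * Gtot g y.
Proof. by move=> x_WE fy; apply: min_of_VI x_WE.1 fy (WE_VI x_WE fy). Qed.

Lemma min_WE g (l : R) (x : P -> R) : feasible_flow d x ->
  (forall y, feasible_flow d y -> Phi x + l * Gtot g x <= Phi y + l * Gtot g y) ->
  WE d tau g l x.
Proof.
move=> fx x_min; apply: VI_WE => // y fy; apply: (VI_of_min fx _ x_min) => e e_gt0 e_le1.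
by apply: feasible_flow_lerp => //; rewrite e_le1 ltW.
Qed.

Lemma WE_Gtot_antitone g (l1 l2 : R) (x1 x2 : P -> R) :
  WE d tau g l1 x1 -> WE d tau g l2 x2 -> l1 < l2 -> Gtot g x2 <= Gtot g x1.
Proof.
move=> WE1 WE2 l12; have h12 := WE_min WE1 WE2.1; have h21 := WE_min WE2 WE1.1.
rewrite leNgt; apply/negP => G12.
have : 0 < (l2 - l1) * (Gtot g x2 - Gtot g x1) by rewrite mulr_gt0 // subr_gt0.
lra.
Qed.

Definition budget_flows g (B : R) : set (P -> R) :=
  [set x | feasible_flow d x /\ Gtot g x <= B].

Lemma closed_budget_flows g (B : R) : closed (budget_flows g B).
Proof.
move=> x clx.
have closure_stable (f : (P -> R) -> R) (D : set R) : continuous f -> closed D ->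
    (forall y, budget_flows g B y -> D (f y)) -> D (f x).
  move=> f_cont D_closed fK; have := (continuous_closedP f).1 f_cont D D_closed.
  by apply; exact: closureS fK _ clx.
split; [split=> [p|i]|].
- apply: (closure_stable (fun y => y p) [set r | 0 <= r]) => [||y [[y_ge0 _] _]].
  + exact: (@proj_continuous P (fun=> R) p).
  + exact: closed_ge.
  + exact: y_ge0.
- rewrite sum_com.
  apply: (closure_stable _ _ (linear_continuous (a := fun r => (com r == i)%:R))
    (closed_eq (y := d i))).
  by move=> y [[_ y_dem] _]; rewrite /= -sum_com.
- rewrite Gtot_lin.
  apply: (closure_stable _ _ (linear_continuous (a := pcharge g)) (closed_le (y := B))).
  by move=> y [_]; rewrite /= Gtot_lin.
Qed.

Lemma compact_budget_flows g (B : R) : compact (budget_flows g B).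
Proof.
pose D := \sum_i d i.
have box_compact : compact [set x : P -> R | forall p, `[0, D]%classic (x p)].
  exact: (tychonoff (fun _ : P => @segment_compact R 0 D)).
apply: (subclosed_compact (closed_budget_flows (g := g) (B := B)) box_compact).
move=> x [[x_ge0 x_dem] _] p; rewrite /= in_itv /= x_ge0 /=.
have x_le : x p <= d (com p).
  rewrite -x_dem sum_com.
  apply: le_trans (ler_term_sum (F := fun r => (com r == com p)%:R * x r) p _).
    by rewrite eqxx mul1r.
  by move=> r; rewrite mulr_ge0.
apply: le_trans x_le (ler_term_sum (F := d) _ _) => i; exact: ltW.
Qed.

Lemma exists_budget_minimizer g (B : R) : feasible_scheme E s t d B g ->
  exists2 xs, budget_flows g B xs & forall y, budget_flows g B y -> Phi xs <= Phi y.
Proof.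
move=> [_ [_ [x0 Kx0]]].
have Phi_cont : {within budget_flows g B, continuous Phi}.
  apply: continuous_in_subspaceT => x; rewrite inE => -[fx _].
  exact: has_gradient_continuous (hpot.2 x fx).
have [xs] := compact_EVT_min (ex_intro _ x0 Kx0) (compact_budget_flows (g := g) (B := B)) Phi_cont.
rewrite inE => Kxs xs_min; exists xs => // y Ky.
by apply: xs_min; rewrite inE.
Qed.

Lemma budget_binding g (B l1 l2 : R) (x1 x2 : P -> R) :
  WE d tau g l1 x1 -> WE d tau g l2 x2 -> l1 < l2 -> Gtot g x1 <= B -> B <= Gtot g x2 ->
  Gtot g x1 = B /\ Gtot g x2 = B.
Proof.
move=> WE1 WE2 l12 G1 G2; have := WE_Gtot_antitone WE1 WE2 l12.
by split; apply/eqP; rewrite eq_le; [rewrite G1 | rewrite G2 andbT]; lra.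
Qed.

Lemma market_eq_binding g (B l : R) (x : P -> R) :
  0 <= l -> WE d tau g l x -> Gtot g x = B -> market_eq d tau g B x l.
Proof. by move=> l_ge0 x_WE GB; split; rewrite ?GB ?subrr ?mulr0 //; case: x_WE. Qed.

Lemma gcost0 g (x : P -> R) : gcost tau g 0 x = tau x.
Proof. by apply: funext => p; rewrite /gcost mul0r addr0. Qed.

Section BudgetMinimizer.
Variables (g : V -> V -> R) (B : R) (xs : P -> R).
Hypotheses (Kxs : budget_flows g B xs)
  (xs_min : forall y, budget_flows g B y -> Phi xs <= Phi y).

Lemma VI_budget (y : P -> R) : budget_flows g B y ->
  0 <= \sum_p tau xs p * (y p - xs p).
Proof.
move=> [fy Gy]; rewrite -(gcost0 g).
apply: (VI_of_min (S := budget_flows g B)) Kxs.1 _ _ => [e e_gt0 e_le1|z Kz].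
  split; first by apply: feasible_flow_lerp Kxs.1 fy _; rewrite e_le1 ltW.
  by rewrite Gtot_lerp; have := Kxs.2; nra.
by rewrite !mul0r !addr0; apply: xs_min.
Qed.

Lemma slack_WE0 : Gtot g xs < B -> WE d tau g 0 xs.
Proof.
move=> slack; apply: VI_WE Kxs.1 _ => y fy; rewrite gcost0.
(* The step [e] satisfies [e * |G y - G xs| <= B - G xs]. *)
pose e := (B - Gtot g xs) / (`|Gtot g y - Gtot g xs| + (B - Gtot g xs)).
have den_gt0 : 0 < `|Gtot g y - Gtot g xs| + (B - Gtot g xs).
  by rewrite ltr_wpDl // subr_gt0.
have e_gt0 : 0 < e by rewrite divr_gt0 // subr_gt0.
have e_den : e * (`|Gtot g y - Gtot g xs| + (B - Gtot g xs)) = B - Gtot g xs.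
  by rewrite divfK // gt_eqF.
have e_le1 : e <= 1 by rewrite ler_pdivrMr // mul1r lerDr.
have Kz : budget_flows g B (lerp xs y e).
  split; first by apply: feasible_flow_lerp Kxs.1 fy _; rewrite e_le1 ltW.
  rewrite Gtot_lerp; have := ler_norm (Gtot g y - Gtot g xs); nra.
have := VI_budget Kz.
under eq_bigr do rewrite lerp_sub mulrCA.
by rewrite -mulr_sumr pmulr_rge0.
Qed.

Lemma exchange_ineq (p q p' q' : P) (a b : R) : 0 < xs p -> 0 < xs p' ->
  com p = com q -> com p' = com q' -> 0 <= a -> 0 <= b ->
  a * (pcharge g q - pcharge g p) + b * (pcharge g q' - pcharge g p') <= 0 ->
  0 <= a * (tau xs q - tau xs p) + b * (tau xs q' - tau xs p').
Proof.
move=> xp_gt0 xp'_gt0 cpq cpq' a_ge0 b_ge0 dG_le0.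
have [ab0|ab_gt0] := eqVneq (a + b) 0.
  have [-> ->] : a = 0 /\ b = 0 by split; lra.
  by rewrite !mul0r addr0.
have {ab_gt0} ab_gt0 : 0 < a + b by rewrite lt_neqAle eq_sym ab_gt0 addr_ge0.
have [k k_gt0 kab] : exists2 k, 0 < k & k * a + k * b = Num.min (xs p) (xs p').
  exists (Num.min (xs p) (xs p') / (a + b)); first by rewrite divr_gt0 // lt_min xp_gt0.
  by rewrite -mulrDr divfK ?gt_eqF.
pose y := reroute xs (k * a) p q (k * b) p' q'.
have Ky : budget_flows g B y.
  have ka_ge0 : 0 <= k * a by rewrite mulr_ge0 // ltW.
  have kb_ge0 : 0 <= k * b by rewrite mulr_ge0 // ltW.
  have kab_p : k * a + k * b <= xs p by rewrite kab ge_min lexx.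
  have kab_p' : k * a + k * b <= xs p' by rewrite kab ge_min lexx orbT.
  split; first exact: feasible_flow_reroute Kxs.1 cpq cpq' ka_ge0 kb_ge0 kab_p kab_p'.
  rewrite -(subrK (Gtot g xs) (Gtot g y)) Gtot_diff sum_reroute; have := Kxs.2; nra.
have := VI_budget Ky; rewrite sum_reroute -!mulrA -mulrDr.
by rewrite pmulr_rge0.
Qed.

Definition switch_price (p q : P) : R :=
  (tau xs p - tau xs q) / (pcharge g q - pcharge g p).

Definition used_upgrade (pq : P * P) : bool :=
  [&& 0 < xs pq.1, com pq.1 == com pq.2 & pcharge g pq.1 < pcharge g pq.2].

Definition min_price : R := \big[Num.max/0]_(pq | used_upgrade pq) switch_price pq.1 pq.2.

Lemma min_price_ge0 : 0 <= min_price.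
Proof. by rewrite /min_price bigmax_idl le_max lexx. Qed.

Lemma min_price_le (l : R) : 0 <= l -> WE d tau g l xs -> min_price <= l.
Proof.
move=> l_ge0 [_ xs_WE]; apply/bigmax_leP; split=> // -[p q] /and3P[/= xp_gt0 /eqP cpq cpc].
by rewrite /switch_price -ler_price_threshold //; apply: xs_WE.
Qed.

Lemma WE_min_price : WE d tau g min_price xs.
Proof.
split=> [|p q cpq xp_gt0]; first exact: Kxs.1.
rewrite /gcost; have [cpc|cqc] := ltP (pcharge g p) (pcharge g q).
  rewrite ler_price_threshold //; apply: (@le_bigmax_cond _ _ _ _ (p, q)).
  by rewrite /used_upgrade /= xp_gt0 cpq eqxx cpc.
suff : min_price * (pcharge g p - pcharge g q) <= tau xs q - tau xs p by lra.
apply: (big_ind (fun m => m * (pcharge g p - pcharge g q) <= tau xs q - tau xs p)).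
- have := @exchange_ineq p q p q 1 0 xp_gt0 xp_gt0 cpq cpq ler01 (lexx 0).
  rewrite !mul0r !addr0 !mul1r subr_le0 => /(_ cqc); lra.
- by move=> m1 m2 h1 h2; rewrite maxEle; case: ifP.
- move=> [p1 q1] /and3P[/= xp1_gt0 /eqP cpq1 cpc1].
  (* Shift flow p -> q and p1 -> q1 so that the credits saved pay for the extra. *)
  have := @exchange_ineq p q p1 q1 (pcharge g q1 - pcharge g p1) (pcharge g p - pcharge g q)
    xp_gt0 xp1_gt0 cpq cpq1.
  rewrite !subr_ge0 (ltW cpc1) cqc => /(_ isT isT).
  have dG : (pcharge g q1 - pcharge g p1) * (pcharge g q - pcharge g p) +
    (pcharge g p - pcharge g q) * (pcharge g q1 - pcharge g p1) = 0 by ring.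
  rewrite dG lexx => /(_ isT) ex.
  rewrite /switch_price mulrAC ler_pdivrMr ?subr_gt0 //; lra.
Qed.

Lemma least_price : exists2 l, market_eq d tau g B xs l &
  forall l', market_eq d tau g B xs l' -> l <= l'.
Proof.
have [slack|binding] := ltP (Gtot g xs) B.
  exists 0; last by move=> l' [].
  by split; rewrite ?mul0r //; [exact: Kxs.1 | exact: slack_WE0 | exact: Kxs.2].
exists min_price => [|l' [_ l'_ge0 l'_WE _ _]]; last exact: min_price_le.
have GB : Gtot g xs = B by apply/eqP; rewrite eq_le Kxs.2.
split; rewrite ?GB ?subrr ?mulr0 //; [exact: Kxs.1 | exact: min_price_ge0 | exact: WE_min_price].
Qed.

Lemma market_eq_at_minimizer (l : R) : market_eq_price d tau g B l -> market_eq d tau g B xs l.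
Proof.
move=> [x [fx l_ge0 x_WE Gx slack]].
have Phi_le := xs_min (conj fx Gx).
have lGx : l * Gtot g x = l * B by move/eqP: slack; rewrite mulrBr subr_eq0 => /eqP.
have lGxs : l * Gtot g xs <= l * B by rewrite ler_wpM2l // Kxs.2.
have x_below := WE_min x_WE Kxs.1.
split=> //; [exact: Kxs.1 | | exact: Kxs.2 | ].
  apply: min_WE Kxs.1 _ => y fy; have := WE_min x_WE fy; lra.
by apply/eqP; rewrite mulrBr subr_eq0 eq_le lGxs; lra.
Qed.

Section LeastPrice.
Variable lmin : R.
Hypotheses (Mlmin : market_eq d tau g B xs lmin)
  (lmin_least : forall l, market_eq d tau g B xs l -> lmin <= l).

Lemma lmin_le_low_set (l : R) : low_set d tau g B l -> lmin <= l.
Proof.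
move=> [l_ge0 [x [x_WE Gx]]]; rewrite leNgt; apply/negP => l_lt.
have [_ _ lmin_WE _ /eqP] := Mlmin.
rewrite mulf_eq0 gt_eqF ?(le_lt_trans l_ge0) //= subr_eq0 => /eqP GB.
have B_le : B <= Gtot g xs by rewrite GB.
have [GxB _] := budget_binding x_WE lmin_WE l_lt Gx B_le.
have := lmin_least (market_eq_at_minimizer (ex_intro _ x (market_eq_binding l_ge0 x_WE GxB))).
by rewrite leNgt l_lt.
Qed.

Lemma market_eq_of_up_set (mu : R) : up_set d tau g B mu -> lmin < mu ->
  market_eq d tau g B xs mu.
Proof.
move=> [mu_ge0 [y [y_WE Gy]]] lt_mu; have [_ _ lmin_WE _ _] := Mlmin.
have [_ GyB] := budget_binding lmin_WE y_WE lt_mu Kxs.2 Gy.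
exact: market_eq_at_minimizer (ex_intro _ y (market_eq_binding mu_ge0 y_WE GyB)).
Qed.

Lemma market_eq_price_bounds (l : R) : market_eq_price d tau g B l ->
  lmin <= l /\ (l%:E <= lambda_bar d tau g B)%E.
Proof.
move=> l_eq; split; first exact: lmin_least (market_eq_at_minimizer l_eq).
case: l_eq => x [_ l_ge0 x_WE Gx /eqP slack]; apply: ereal_sup_ubound.
have [->|l_neq0] := eqVneq l 0; [by right | left].
move: slack; rewrite mulf_eq0 (negbTE l_neq0) subr_eq0 => /eqP GxB.
by exists l => //; split=> //; exists x; rewrite GxB.
Qed.

Lemma market_eq_price_of_bounds (l : R) : 0 <= l -> lmin <= l ->
  (l%:E <= lambda_bar d tau g B)%E -> market_eq_price d tau g B l.
Proof.
move=> l_ge0 lmin_le l_le_bar; exists xs.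
have [_ lmin_ge0 [_ lmin_WE] _ lmin_slack] := Mlmin.
have affine (a b : R) : 0 <= a + lmin * b ->
    (forall mu, market_eq d tau g B xs mu -> 0 <= a + mu * b) -> 0 <= a + l * b.
  move=> f_lmin f_eq; apply: (affine_ge0_le_sup lmin_ge0 lmin_le l_le_bar f_lmin).
  by move=> mu mu_up lt_mu; apply: f_eq; exact: market_eq_of_up_set.
split=> //; [exact: Kxs.1 | split=> [|p q cpq xp_gt0]; first exact: Kxs.1 | exact: Kxs.2 |].
  suff : 0 <= (tau xs q - tau xs p) + l * (pcharge g q - pcharge g p) by rewrite /gcost; lra.
  apply: affine => [|mu [_ _ [_ mu_WE] _ _]].
    by have := lmin_WE p q cpq xp_gt0; rewrite /gcost; lra.
  by have := mu_WE p q cpq xp_gt0; rewrite /gcost; lra.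
have : 0 <= 0 + l * (Gtot g xs - B).
  by apply: affine => [|mu [_ _ _ _ ->]]; rewrite ?lmin_slack addr0.
rewrite add0r => ge0; apply/eqP; rewrite eq_le ge0 andbT mulr_ge0_le0 // subr_le0.
exact: Kxs.2.
Qed.

End LeastPrice.

End BudgetMinimizer.

End Flows.

Theorem lemma5p8 (R : realType) (V : finType) (E : rel V) (I : finType)
  (s t : I -> V) (d : I -> R) (hd : forall i, 0 < d i)
  (B : R) (g : V -> V -> R)
  (hfeas : feasible_scheme E s t d B g)
  (tau : (cpath E s t -> R) -> cpath E s t -> R)
  (Phi : (cpath E s t -> R) -> R)
  (hpot : convex_potential d tau Phi) :
  exists lmin : R,
    [/\ low_set d tau g B lmin,
        (forall l, low_set d tau g B l -> lmin <= l)
      & forall l : R, 0 <= l ->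
          (market_eq_price d tau g B l <->
           (lmin <= l /\ (l%:E <= lambda_bar d tau g B)%E))].
Proof.
have [xs Kxs xs_min] := exists_budget_minimizer hpot hd hfeas.
have [lmin Mlmin lmin_least] := least_price hpot Kxs xs_min.
exists lmin; split.
- by case: Mlmin => _ lmin_ge0 lmin_WE _ _; split=> //; exists xs; split=> //; case: Kxs.
- exact: (lmin_le_low_set hpot hd Kxs xs_min Mlmin lmin_least).
- move=> l l_ge0; split; first exact: (market_eq_price_bounds hpot hd Kxs xs_min lmin_least).
  by case; exact: (market_eq_price_of_bounds hpot hd Kxs xs_min Mlmin l_ge0).
Qed.
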